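(* Let $r>0$ be real. For every integer $N\ge1$, $$g_r=\frac{m}{(m+1)^{r+1}}\left\{\sum_{k=0}^{N-1}(-1)^k\frac{\tilde\mu_k}{(m+1)^k}\binom{r+k}{r}+O\!\left(m^{-\lceil N/2\rceil}\right)\right\}\quad\text{as } m\to\infty.$$
   Context: For $m>0$, $g_r=\sum_{s=1}^\infty e^{-m}\frac{m^s}{s!}\,s^{-r}$ (the $r$-th inverse moment of the positive Poisson distribution times $1-e^{-m}$), and $\tilde\mu_k=\sum_{s=0}^\infty e^{-m}\frac{m^s}{s!}(s-m)^k$ is the $k$-th central moment of the Poisson distribution with mean $m$. For non-integer $r$, $\binom{r+k}{r}:=(r+1)(r+2)\cdots(r+k)/k!$ (and $=1$ for $k=0$). $\lceil x\rceil$ is the ceiling of $x$. *)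

From Stdlib Require Import Reals.
From Coquelicot Require Import Coquelicot.
Open Scope R_scope.

Definition poisson_w (m : R) (s : nat) : R := exp (- m) * m ^ s / INR (Factorial.fact s).

(* g_r = sum_{s>=1} e^{-m} m^s/s! * s^{-r}  (index shifted: s = n+1) *)
Definition g (r m : R) : R :=
  Series (fun n : nat => poisson_w m (S n) * Rpower (INR (S n)) (- r)).

(* k-th central moment of Poisson(m): sum_{s>=0} e^{-m} m^s/s! (s-m)^k *)
Definition mu_tilde (m : R) (k : nat) : R :=
  Series (fun s : nat => poisson_w m s * (INR s - m) ^ k).

Fixpoint rising (r : R) (k : nat) : R :=
  match k with
  | O => 1
  | S k' => rising r k' * (r + INR (S k'))
  end.

(* generalized binomial coefficient binom(r+k, r) = (r+1)...(r+k)/k! *)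
Definition gbinom (r : R) (k : nat) : R := rising r k / INR (Factorial.fact k).

Definition ceil_half (N : nat) : nat := Nat.div (N + 1) 2.

(* Since s p_s = m p_(s-1) for the Poisson weights p_s, g_r = m E[(S + 1)^-(r+1)] with
   S ~ Poisson(m); writing S + 1 = (m + 1)(1 + U) with U = (S - m)/(m + 1) gives
   g_r = m (m + 1)^-(r+1) E[(1 + U)^-(r+1)].  Expand (1 + u)^-(r+1) by Taylor's formula to
   order 2h - 1, h = ceil(N/2): the coefficients are (-1)^k binom(r+k, r), and
   E[U^k] = mu_k / (m + 1)^k.  For u >= -1/2 the Lagrange remainder is O(u^(2h)); on the
   rest of the range u >= -m/(m + 1), both (1 + u)^-(r+1) <= (m + 1)^(r+1) and the
   polynomial are bounded, and 4u^2 >= 1 there, so the remainder is O((m + 1)^(r+1) u^(2J)).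
   The central moments satisfy mu_(k+2) = m sum_(i<=k) C(k+1, i) mu_i, hence
   mu_j = O(m^floor(j/2)) and E[U^j] = O(m^-ceil(j/2)); with J >= r + 1 + h every error
   term is O(m^-h).  For odd N the expansion of degree 2h - 1 = N has one more term than
   the claimed sum, and that term k = N is itself O(m^-h). *)

From Stdlib Require Import Reals Lra Lia.
From Coquelicot Require Import Coquelicot.
Open Scope R_scope.

(** * Taylor expansion of (1 + u)^-(r+1) *)

Lemma fact_INR_pos (k : nat) : 0 < INR (Factorial.fact k).
Proof. apply lt_0_INR, Factorial.lt_O_fact. Qed.

Lemma Rpower_pos (x e : R) : 0 < Rpower x e.
Proof. apply exp_pos. Qed.

Lemma Rpower_1_l (e : R) : Rpower 1 e = 1.
Proof. unfold Rpower. rewrite ln_1, Rmult_0_r. apply exp_0. Qed.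

Lemma Rle_Rpower_l_nonpos (x y e : R) : 0 < x -> x <= y -> e <= 0 -> Rpower y e <= Rpower x e.
Proof.
  intros Hx Hxy He.
  replace e with (- - e) by ring. rewrite (Rpower_Ropp y (-e)), (Rpower_Ropp x (-e)).
  apply Rinv_le_contravar; [apply Rpower_pos|].
  apply Rle_Rpower_l; lra.
Qed.

Lemma Rpower_opp_le_of_inv_le (r q u : R) : -1 <= r -> 0 < q -> / q <= 1 + u ->
  Rpower (1 + u) (- (r + 1)) <= Rpower q (r + 1).
Proof.
  intros Hr Hq Hu.
  assert (Hq' : 0 < / q) by (apply Rinv_0_lt_compat, Hq).
  replace (Rpower q (r + 1)) with (Rpower (/ q) (- (r + 1))).
  - apply Rle_Rpower_l_nonpos; lra.
  - unfold Rpower. rewrite ln_Rinv by exact Hq. f_equal. ring.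
Qed.

Lemma Rpower_succ_le_pow (m a : R) (A : nat) : 1 <= m -> 0 <= a <= INR A ->
  Rpower (m + 1) a <= (2 * m) ^ A.
Proof.
  intros Hm Ha.
  apply Rle_trans with (Rpower (m + 1) (INR A)); [apply Rle_Rpower; lra|].
  rewrite Rpower_pow by lra. apply pow_incr. lra.
Qed.

Definition taylor_coef (r : R) (k : nat) : R := (-1) ^ k * gbinom r k.

Lemma locally_affine_pos (s t : R) : 0 < 1 + s * t -> locally t (fun x => 0 < 1 + s * x).
Proof.
  intros H.
  assert (Hc : continuous (fun x : R => 1 + s * x) t).
  { apply (@ex_derive_continuous R_AbsRing R_NormedModule). auto_derive. auto. }
  exact (Hc _ (open_gt 0 _ H)).
Qed.

Lemma is_derive_Rpower_affine (b s t : R) : 0 < 1 + s * t ->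
  is_derive (fun x => Rpower (1 + s * x) b) t (s * (b * Rpower (1 + s * t) (b - 1))).
Proof.
  intros H.
  apply (is_derive_comp (fun y => Rpower y b) (fun x => 1 + s * x)).
  - apply is_derive_Reals, derivable_pt_lim_power, H.
  - auto_derive; [auto | ring].
Qed.

Lemma Derive_n_Rpower_affine (r s : R) (k : nat) (t : R) : 0 < 1 + s * t ->
  ex_derive_n (fun x => Rpower (1 + s * x) (- (r + 1))) k t /\
  Derive_n (fun x => Rpower (1 + s * x) (- (r + 1))) k t =
    (-1) ^ k * rising r k * s ^ k * Rpower (1 + s * t) (- (r + 1) - INR k).
Proof.
  set (f := fun x => Rpower (1 + s * x) (- (r + 1))).
  revert t. induction k as [|k IH]; intros t Ht.
  - split; [exact I|]. simpl. rewrite Rminus_0_r. unfold f. ring.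
  - set (ck := (-1) ^ k * rising r k * s ^ k).
    assert (Hloc : locally t (fun x => Derive_n f k x =
                                       ck * Rpower (1 + s * x) (- (r + 1) - INR k))).
    { apply (filter_imp (fun x => 0 < 1 + s * x)); [|now apply locally_affine_pos].
      intros x Hx. apply (IH x Hx). }
    assert (HD : is_derive (fun x => ck * Rpower (1 + s * x) (- (r + 1) - INR k)) t
                   (ck * (s * ((- (r + 1) - INR k) * Rpower (1 + s * t) (- (r + 1) - INR k - 1))))).
    { apply is_derive_scal, is_derive_Rpower_affine, Ht. }
    split.
    + eapply ex_derive_ext_loc.
      { exact (filter_imp _ _ (fun x H => eq_sym H) Hloc). }
      eexists; exact HD.
    + change (Derive_n f (S k) t) with (Derive (Derive_n f k) t).
      rewrite (Derive_ext_loc _ _ t Hloc).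
      erewrite is_derive_unique; [|exact HD].
      unfold ck. cbn [rising pow]. rewrite S_INR.
      replace (- (r + 1) - INR k - 1) with (- (r + 1) - (INR k + 1)) by ring. ring.
Qed.

Definition taylor_rem_const (r : R) (n : nat) : R :=
  Rabs (taylor_coef r (S n)) * Rpower (/ 2) (- (r + 1) - INR (S n)).

Lemma taylor_rem_const_nonneg (r : R) (n : nat) : 0 <= taylor_rem_const r n.
Proof. apply Rmult_le_pos; [apply Rabs_pos | left; apply Rpower_pos]. Qed.

Lemma Derive_n_Rpower_affine_fact (r s t : R) (k : nat) : 0 < 1 + s * t ->
  Derive_n (fun x => Rpower (1 + s * x) (- (r + 1))) k t / INR (Factorial.fact k) =
    taylor_coef r k * s ^ k * Rpower (1 + s * t) (- (r + 1) - INR k).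
Proof.
  intros Ht. rewrite (proj2 (Derive_n_Rpower_affine r s k t Ht)).
  unfold taylor_coef, gbinom. field. apply Rgt_not_eq, fact_INR_pos.
Qed.

Lemma Rpower_affine_taylor_remainder (r s y : R) (n : nat) :
  -1 <= r -> Rabs s = 1 -> 0 < y -> (forall t, 0 <= t <= y -> / 2 <= 1 + s * t) ->
  Rabs (Rpower (1 + s * y) (- (r + 1)) - sum_f_R0 (fun k => taylor_coef r k * (s * y) ^ k) n)
    <= taylor_rem_const r n * y ^ S n.
Proof.
  intros Hr Hs Hy Hd.
  set (f := fun x => Rpower (1 + s * x) (- (r + 1))).
  destruct (Taylor_Lagrange f n 0 y Hy) as [z [Hz Heq]].
  { intros t Ht k _. apply Derive_n_Rpower_affine. specialize (Hd t Ht). lra. }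
  assert (Hz1 : / 2 <= 1 + s * z) by (apply Hd; lra).
  assert (Hpoly : sum_f_R0 (fun k => (y - 0) ^ k / INR (Factorial.fact k) * Derive_n f k 0) n =
                  sum_f_R0 (fun k => taylor_coef r k * (s * y) ^ k) n).
  { apply sum_eq. intros k _. unfold f, Rdiv.
    rewrite Rmult_assoc, (Rmult_comm (/ _)), <- Rdiv_def, Derive_n_Rpower_affine_fact by lra.
    rewrite Rmult_0_r, Rplus_0_r, Rpower_1_l, Rminus_0_r, Rpow_mult_distr. ring. }
  assert (Hrem : (y - 0) ^ S n / INR (Factorial.fact (S n)) * Derive_n f (S n) z =
                 taylor_coef r (S n) * s ^ S n * Rpower (1 + s * z) (- (r + 1) - INR (S n))
                   * y ^ S n).
  { unfold f, Rdiv. rewrite Rmult_assoc, (Rmult_comm (/ _)), <- Rdiv_def.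
    rewrite Derive_n_Rpower_affine_fact, Rminus_0_r by lra. ring. }
  change (Rpower (1 + s * y) (- (r + 1))) with (f y). rewrite Heq, Hpoly, Hrem.
  replace (_ + _ - _) with (taylor_coef r (S n) * s ^ S n *
            Rpower (1 + s * z) (- (r + 1) - INR (S n)) * y ^ S n) by ring.
  rewrite !Rabs_mult, <- RPow_abs, Hs, pow1, Rmult_1_r.
  rewrite (Rabs_right (Rpower _ _)) by (left; apply Rpower_pos).
  rewrite (Rabs_right (y ^ S n)) by (left; apply pow_lt, Hy).
  apply Rmult_le_compat_r; [left; apply pow_lt, Hy|].
  apply Rmult_le_compat_l; [apply Rabs_pos|].
  apply Rle_Rpower_l_nonpos; [lra | exact Hz1 |]. pose proof (pos_INR (S n)). lra.
Qed.

Lemma Rpower_taylor_remainder (r u : R) (n : nat) : -1 <= r -> - / 2 <= u ->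
  Rabs (Rpower (1 + u) (- (r + 1)) - sum_f_R0 (fun k => taylor_coef r k * u ^ k) n)
    <= taylor_rem_const r n * Rabs u ^ S n.
Proof.
  intros Hr Hu.
  destruct (Rtotal_order u 0) as [Hneg | [-> | Hpos]].
  - pose proof (Rpower_affine_taylor_remainder r (-1) (- u) n Hr) as H.
    replace (-1 * - u) with u in H by ring.
    rewrite (Rabs_left u) by lra. apply H; [rewrite Rabs_left by lra; lra | lra |].
    intros t Ht. lra.
  - rewrite Rabs_R0, pow_i, Rmult_0_r by lia.
    rewrite Rplus_0_r, Rpower_1_l.
    replace (sum_f_R0 _ n) with 1; [rewrite Rminus_diag, Rabs_R0; lra|].
    induction n as [|n IH]; [unfold taylor_coef, gbinom; simpl; field|].
    rewrite tech5, <- IH, pow_i by lia. ring.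
  - pose proof (Rpower_affine_taylor_remainder r 1 u n Hr) as H.
    rewrite Rmult_1_l in H. rewrite (Rabs_right u) by lra.
    apply H; [apply Rabs_R1 | lra |]. intros t Ht. lra.
Qed.

Definition taylor_coef_abs_sum (r : R) (n : nat) : R :=
  sum_f_R0 (fun k => Rabs (taylor_coef r k)) n.

Lemma taylor_coef_abs_sum_nonneg (r : R) (n : nat) : 0 <= taylor_coef_abs_sum r n.
Proof. apply cond_pos_sum. intros; apply Rabs_pos. Qed.

(* Away from [u >= -1/2] the remainder is merely bounded, and [4 u^2 >= 1] there. *)
Lemma Rpower_taylor_remainder_global (r q u : R) (n h J : nat) :
  -1 <= r -> S n = (2 * h)%nat -> 1 <= q -> / q <= 1 + u ->
  Rabs (Rpower (1 + u) (- (r + 1)) - sum_f_R0 (fun k => taylor_coef r k * u ^ k) n)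
    <= taylor_rem_const r n * (u ^ 2) ^ h
       + (Rpower q (r + 1) + taylor_coef_abs_sum r n) * (4 * u ^ 2) ^ J.
Proof.
  intros Hr Hn Hq Hu.
  pose proof (taylor_rem_const_nonneg r n) as HK.
  pose proof (taylor_coef_abs_sum_nonneg r n) as HL.
  pose proof (Rpower_pos q (r + 1)) as Hpq.
  assert (Hh : 0 <= (u ^ 2) ^ h) by (apply pow_le; nra).
  assert (HJ : 0 <= (4 * u ^ 2) ^ J) by (apply pow_le; nra).
  destruct (Rle_dec (- / 2) u) as [Hge | Hlt].
  - eapply Rle_trans; [apply Rpower_taylor_remainder; assumption|].
    rewrite Hn, pow_mult, pow2_abs.
    assert (0 <= (Rpower q (r + 1) + taylor_coef_abs_sum r n) * (4 * u ^ 2) ^ J)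
      by (apply Rmult_le_pos; lra).
    lra.
  - assert (Hq1 : / q <= 1) by (rewrite <- Rinv_1; apply Rinv_le_contravar; lra).
    assert (Hq0 : 0 < / q) by (apply Rinv_0_lt_compat; lra).
    assert (Hu1 : Rabs u <= 1) by (apply Rabs_le; split; lra).
    assert (HF : Rabs (Rpower (1 + u) (- (r + 1))) <= Rpower q (r + 1)).
    { rewrite Rabs_right by (left; apply Rpower_pos).
      apply Rpower_opp_le_of_inv_le; lra. }
    assert (HT : Rabs (sum_f_R0 (fun k => taylor_coef r k * u ^ k) n)
                   <= taylor_coef_abs_sum r n).
    { eapply Rle_trans; [apply sum_f_R0_triangle|]. apply sum_Rle. intros k _.
      rewrite Rabs_mult, <- RPow_abs.
      assert (Rabs u ^ k <= 1)
        by (rewrite <- (pow1 k); apply pow_incr; split; [apply Rabs_pos | lra]).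
      assert (0 <= Rabs u ^ k) by (apply pow_le, Rabs_pos).
      pose proof (Rabs_pos (taylor_coef r k)). nra. }
    assert (H4 : 1 <= (4 * u ^ 2) ^ J) by (apply pow_R1_Rle; nra).
    eapply Rle_trans; [apply Rabs_triang|]. rewrite Rabs_Ropp.
    assert (0 <= taylor_rem_const r n * (u ^ 2) ^ h) by (apply Rmult_le_pos; lra).
    assert ((Rpower q (r + 1) + taylor_coef_abs_sum r n) * 1
            <= (Rpower q (r + 1) + taylor_coef_abs_sum r n) * (4 * u ^ 2) ^ J)
      by (apply Rmult_le_compat_l; lra).
    lra.
Qed.

(** * Poisson expectations *)

Lemma ex_series_Rscal (c : R) (a : nat -> R) : ex_series a -> ex_series (fun n => c * a n).
Proof. exact (@ex_series_scal_l _ R_NormedModule c a). Qed.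

Lemma ex_series_Rplus (a b : nat -> R) :
  ex_series a -> ex_series b -> ex_series (fun n => a n + b n).
Proof. exact (@ex_series_plus _ R_NormedModule a b). Qed.

Lemma ex_series_Rle (a b : nat -> R) :
  (forall n, Rabs (a n) <= b n) -> ex_series b -> ex_series a.
Proof. exact (@ex_series_le R_AbsRing R_CompleteNormedModule a b). Qed.

Definition poisson_mean (m : R) (f : nat -> R) : R := Series (fun s => poisson_w m s * f s).

Definition poisson_summable (m : R) (f : nat -> R) : Prop :=
  ex_series (fun s => poisson_w m s * f s).

Lemma poisson_w_S (m : R) (s : nat) : poisson_w m (S s) = m / INR (S s) * poisson_w m s.
Proof.
  unfold poisson_w. change (Factorial.fact (S s)) with (S s * Factorial.fact s)%nat.
  rewrite mult_INR. simpl pow. field.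
  split; [apply Rgt_not_eq, fact_INR_pos | apply not_0_INR; lia].
Qed.

Lemma is_series_poisson_w (m : R) : is_series (poisson_w m) 1.
Proof.
  assert (H : is_series (fun s => / INR (Factorial.fact s) * m ^ s) (exp m))
    by (apply is_series_Reals; exact (proj2_sig (exist_exp m))).
  apply (is_series_scal_l (exp (- m))) in H.
  replace 1 with (exp (- m) * exp m) by (rewrite <- exp_plus, Rplus_opp_l; apply exp_0).
  eapply is_series_ext; [|exact H]. intros s. unfold poisson_w, scal; simpl; unfold mult; simpl.
  field. apply Rgt_not_eq, fact_INR_pos.
Qed.

Section Poisson.

Variable m : R.
Hypothesis Hm : 0 < m.

Lemma poisson_w_pos (s : nat) : 0 < poisson_w m s.
Proof.
  apply Rdiv_lt_0_compat; [|apply fact_INR_pos].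
  apply Rmult_lt_0_compat; [apply exp_pos | apply pow_lt, Hm].
Qed.

(* The size-biased Poisson law is the shifted one: [s p_s = m p_(s-1)]. *)
Lemma poisson_summable_pow_succ (k : nat) : poisson_summable m (fun s => (INR s + 1) ^ k).
Proof.
  unfold poisson_summable. induction k as [|k IH].
  - apply (ex_series_ext (poisson_w m)); [intros; simpl; ring | eexists; apply is_series_poisson_w].
  - assert (Hbiased : ex_series (fun s => poisson_w m s * INR s * (INR s + 1) ^ k)).
    { apply ex_series_incr_1.
      apply (ex_series_Rle _ (fun t => m * 2 ^ k * (poisson_w m t * (INR t + 1) ^ k)));
        [|apply ex_series_Rscal, IH].
      intros t. rewrite poisson_w_S, S_INR.
      pose proof (poisson_w_pos t). pose proof (pos_INR t).
      replace (m / (INR t + 1) * poisson_w m t * (INR t + 1) * (INR t + 1 + 1) ^ k)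
        with (m * poisson_w m t * (INR t + 1 + 1) ^ k) by (field; lra).
      replace (m * 2 ^ k * (poisson_w m t * (INR t + 1) ^ k))
        with (m * poisson_w m t * (2 * (INR t + 1)) ^ k) by (rewrite Rpow_mult_distr; ring).
      assert (0 < m * poisson_w m t) by (apply Rmult_lt_0_compat; lra).
      rewrite Rabs_right.
      + apply Rmult_le_compat_l; [lra | apply pow_incr; lra].
      + apply Rle_ge, Rmult_le_pos; [lra | apply pow_le; lra]. }
    apply (ex_series_ext (fun s => poisson_w m s * (INR s + 1) ^ k
                                   + poisson_w m s * INR s * (INR s + 1) ^ k));
      [intros s; simpl; ring | apply ex_series_Rplus; assumption].
Qed.

Lemma poisson_summable_poly_bound (f : nat -> R) (A : R) (k : nat) :
  (forall s, Rabs (f s) <= A * (INR s + 1) ^ k) -> poisson_summable m f.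
Proof.
  intros Hf.
  apply (ex_series_Rle _ (fun s => A * (poisson_w m s * (INR s + 1) ^ k)));
    [|apply ex_series_Rscal, poisson_summable_pow_succ].
  intros s. rewrite Rabs_mult, Rabs_right by (left; apply poisson_w_pos).
  pose proof (poisson_w_pos s). specialize (Hf s). nra.
Qed.

Lemma poisson_mean_scal (c : R) (f : nat -> R) :
  poisson_mean m (fun s => c * f s) = c * poisson_mean m f.
Proof.
  unfold poisson_mean. rewrite <- Series_scal_l. apply Series_ext. intros; ring.
Qed.

Lemma poisson_summable_scal (c : R) (f : nat -> R) :
  poisson_summable m f -> poisson_summable m (fun s => c * f s).
Proof.
  unfold poisson_summable. intros Hf.
  apply (ex_series_ext (fun s => c * (poisson_w m s * f s)));
    [intros; simpl; ring | apply ex_series_Rscal, Hf].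
Qed.

Lemma poisson_summable_plus (f h : nat -> R) : poisson_summable m f -> poisson_summable m h ->
  poisson_summable m (fun s => f s + h s).
Proof.
  unfold poisson_summable. intros Hf Hh.
  apply (ex_series_ext (fun s => poisson_w m s * f s + poisson_w m s * h s));
    [intros; simpl; ring | apply ex_series_Rplus; assumption].
Qed.

Lemma poisson_mean_plus (f h : nat -> R) : poisson_summable m f -> poisson_summable m h ->
  poisson_mean m (fun s => f s + h s) = poisson_mean m f + poisson_mean m h.
Proof.
  intros Hf Hh. unfold poisson_mean. rewrite <- Series_plus by assumption.
  apply Series_ext. intros; ring.
Qed.

Lemma poisson_mean_minus (f h : nat -> R) : poisson_summable m f -> poisson_summable m h ->
  poisson_mean m (fun s => f s - h s) = poisson_mean m f - poisson_mean m h.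
Proof.
  intros Hf Hh. unfold poisson_mean. rewrite <- Series_minus by assumption.
  apply Series_ext. intros; ring.
Qed.

Lemma poisson_mean_sum (c : nat -> R) (f : nat -> nat -> R) (n : nat) :
  (forall k, poisson_summable m (f k)) ->
  poisson_summable m (fun s => sum_f_R0 (fun k => c k * f k s) n) /\
  poisson_mean m (fun s => sum_f_R0 (fun k => c k * f k s) n) =
    sum_f_R0 (fun k => c k * poisson_mean m (f k)) n.
Proof.
  intros Hf. induction n as [|n [IH1 IH2]].
  - split; [apply poisson_summable_scal, Hf | apply poisson_mean_scal].
  - assert (Hn : poisson_summable m (fun s => c (S n) * f (S n) s))
      by (apply poisson_summable_scal, Hf).
    split; [exact (poisson_summable_plus _ _ IH1 Hn)|].
    cbn [sum_f_R0]. rewrite poisson_mean_plus, IH2, poisson_mean_scal by assumption.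
    reflexivity.
Qed.

Lemma Rabs_poisson_mean_le (f b : nat -> R) :
  (forall s, Rabs (f s) <= b s) -> poisson_summable m b ->
  Rabs (poisson_mean m f) <= poisson_mean m b.
Proof.
  intros Hfb Hb. unfold poisson_mean.
  assert (Hp : forall s, 0 <= Rabs (poisson_w m s * f s) <= poisson_w m s * b s).
  { intros s. split; [apply Rabs_pos|].
    rewrite Rabs_mult, (Rabs_right (poisson_w m s)) by (left; apply poisson_w_pos).
    apply Rmult_le_compat_l; [left; apply poisson_w_pos | apply Hfb]. }
  eapply Rle_trans; [apply Series_Rabs | apply Series_le; assumption].
  apply (ex_series_Rle _ (fun s => poisson_w m s * b s)); [|exact Hb].
  intros s. rewrite Rabs_Rabsolu. apply Hp.
Qed.

Lemma poisson_mean_mul_id (h : nat -> R) : poisson_summable m (fun s => INR s * h s) ->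
  poisson_mean m (fun s => INR s * h s) = m * poisson_mean m (fun s => h (S s)).
Proof.
  intros H. unfold poisson_mean. rewrite Series_incr_1 by exact H.
  simpl INR at 1. rewrite Rmult_0_l, Rmult_0_r, Rplus_0_l, <- Series_scal_l.
  apply Series_ext. intros s. rewrite poisson_w_S. field. apply not_0_INR. lia.
Qed.

End Poisson.

(** * Central moments of the Poisson law *)

Lemma mu_tilde_0 (m : R) : mu_tilde m 0 = 1.
Proof.
  unfold mu_tilde. rewrite (Series_ext _ (poisson_w m)) by (intros; simpl; ring).
  apply is_series_unique, is_series_poisson_w.
Qed.

Section CentralMoments.

Variable m : R.
Hypothesis Hm : 0 < m.

Lemma poisson_summable_central_pow (k : nat) : poisson_summable m (fun s => (INR s - m) ^ k).
Proof.
  apply (poisson_summable_poly_bound m Hm _ ((1 + m) ^ k) k). intros s.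
  rewrite <- RPow_abs, <- Rpow_mult_distr. pose proof (pos_INR s).
  apply pow_incr. split; [apply Rabs_pos | apply Rabs_le; split; nra].
Qed.

Lemma poisson_summable_mul_central_pow (k : nat) :
  poisson_summable m (fun s => INR s * (INR s - m) ^ k).
Proof.
  apply (poisson_summable_poly_bound m Hm _ ((1 + m) ^ k) (S k)). intros s.
  rewrite Rabs_mult, <- RPow_abs. pose proof (pos_INR s). simpl pow.
  replace ((1 + m) ^ k * ((INR s + 1) * (INR s + 1) ^ k))
    with ((INR s + 1) * ((1 + m) * (INR s + 1)) ^ k) by (rewrite Rpow_mult_distr; ring).
  apply Rmult_le_compat; [apply Rabs_pos | apply pow_le, Rabs_pos | rewrite Rabs_right; lra |].
  apply pow_incr. split; [apply Rabs_pos | apply Rabs_le; split; nra].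
Qed.

Lemma mu_tilde_S (k : nat) :
  mu_tilde m (S k) = m * (sum_f_R0 (fun i => Binomial.C k i * mu_tilde m i) k - mu_tilde m k).
Proof.
  change (mu_tilde m (S k)) with (poisson_mean m (fun s => (INR s - m) ^ S k)).
  replace (poisson_mean m (fun s => (INR s - m) ^ S k))
    with (poisson_mean m (fun s => INR s * (INR s - m) ^ k - m * (INR s - m) ^ k))
    by (apply Series_ext; intros; simpl; ring).
  rewrite poisson_mean_minus, poisson_mean_mul_id, poisson_mean_scal;
    auto using poisson_summable_mul_central_pow, poisson_summable_scal,
               poisson_summable_central_pow.
  assert (Hbin : forall s, (INR (S s) - m) ^ k =
                 sum_f_R0 (fun i => Binomial.C k i * (INR s - m) ^ i) k).
  { intros s. rewrite S_INR. replace (INR s + 1 - m) with ((INR s - m) + 1) by ring.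
    rewrite binomial. apply sum_eq. intros i _. rewrite pow1. ring. }
  replace (poisson_mean m (fun s => (INR (S s) - m) ^ k))
    with (poisson_mean m (fun s => sum_f_R0 (fun i => Binomial.C k i * (INR s - m) ^ i) k))
    by (apply Series_ext; intros s; rewrite Hbin; reflexivity).
  rewrite (proj2 (poisson_mean_sum m (Binomial.C k) (fun i s => (INR s - m) ^ i) k
                    poisson_summable_central_pow)).
  unfold mu_tilde, poisson_mean. ring.
Qed.

Lemma mu_tilde_1 : mu_tilde m 1 = 0.
Proof. rewrite mu_tilde_S. simpl. rewrite mu_tilde_0, C_n_n. ring. Qed.

Lemma mu_tilde_SS (k : nat) :
  mu_tilde m (S (S k)) = m * sum_f_R0 (fun i => Binomial.C (S k) i * mu_tilde m i) k.
Proof. rewrite mu_tilde_S, tech5, C_n_n. ring. Qed.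

End CentralMoments.

Lemma C_nonneg (n i : nat) : 0 <= Binomial.C n i.
Proof.
  unfold Binomial.C. apply Rmult_le_pos; [apply pos_INR|].
  left; apply Rinv_0_lt_compat, Rmult_lt_0_compat; apply fact_INR_pos.
Qed.

Lemma mu_tilde_bound (k : nat) : exists K, 0 <= K /\
  forall j m, (j <= k)%nat -> 1 <= m -> Rabs (mu_tilde m j) <= K * m ^ Nat.div j 2.
Proof.
  induction k as [|k [K [HK IH]]].
  { exists 1. split; [lra|]. intros j m Hj Hm. replace j with 0%nat by lia.
    rewrite mu_tilde_0, Rabs_R1. simpl. lra. }
  destruct k as [|k].
  { exists K. split; [exact HK|]. intros [|[|j]] m Hj Hm; try lia.
    - apply IH; [lia | exact Hm].
    - rewrite mu_tilde_1, Rabs_R0 by lra. apply Rmult_le_pos; [exact HK | apply pow_le; lra]. }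
  set (B := sum_f_R0 (fun i => Binomial.C (S k) i) k).
  assert (HB : 0 <= B) by (apply cond_pos_sum; intros; apply C_nonneg).
  exists (Rmax K (B * K)). split; [eapply Rle_trans; [exact HK | apply Rmax_l]|].
  intros j m Hj Hm.
  assert (Hpow : forall i, 0 <= m ^ i) by (intros; apply pow_le; lra).
  destruct (Nat.eq_dec j (S (S k))) as [-> | Hne].
  2: { eapply Rle_trans; [apply IH; [lia | exact Hm]|].
       apply Rmult_le_compat_r; [apply Hpow | apply Rmax_l]. }
  assert (Hsum : Rabs (sum_f_R0 (fun i => Binomial.C (S k) i * mu_tilde m i) k)
                   <= B * K * m ^ Nat.div k 2).
  { eapply Rle_trans; [apply sum_f_R0_triangle|].
    unfold B. rewrite Rmult_assoc, Rmult_comm, scal_sum. apply sum_Rle. intros i Hi.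
    rewrite Rabs_mult, (Rabs_right (Binomial.C _ _)) by (apply Rle_ge, C_nonneg).
    apply Rmult_le_compat_l; [apply C_nonneg|].
    eapply Rle_trans; [apply IH; [lia | exact Hm]|].
    apply Rmult_le_compat_l; [exact HK|].
    apply Rle_pow; [exact Hm | apply Nat.Div0.div_le_mono; lia]. }
  replace (Nat.div (S (S k)) 2) with (S (Nat.div k 2)).
  2: { replace (S (S k)) with (k + 1 * 2)%nat by lia. rewrite Nat.div_add; lia. }
  rewrite mu_tilde_SS, Rabs_mult, (Rabs_right m) by lra. cbn [pow].
  pose proof (Hpow (Nat.div k 2)) as Hmk. pose proof (Rmax_r K (B * K)) as HBK.
  apply Rle_trans with (m * (B * K * m ^ Nat.div k 2)); [apply Rmult_le_compat_l; lra|].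
  replace (m * (B * K * m ^ Nat.div k 2)) with (B * K * (m * m ^ Nat.div k 2)) by ring.
  apply Rmult_le_compat_r; [nra | exact HBK].
Qed.

Lemma Rabs_div_pow_le (m q K x : R) (i h j : nat) : 1 <= m -> m <= q -> (i + h <= j)%nat ->
  0 <= K -> Rabs x <= K * m ^ i -> Rabs (x / q ^ j) <= K / m ^ h.
Proof.
  intros Hm Hq Hj HK Hx.
  assert (Hmi : 0 < m ^ i) by (apply pow_lt; lra).
  assert (Hmh : 0 < m ^ h) by (apply pow_lt; lra).
  assert (Hle : m ^ i * m ^ h <= q ^ j).
  { rewrite <- pow_add. apply Rle_trans with (m ^ j); [apply Rle_pow; assumption|].
    apply pow_incr; lra. }
  assert (Hqj : 0 < q ^ j) by (apply pow_lt; lra).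
  unfold Rdiv. rewrite Rabs_mult, Rabs_inv, (Rabs_right (q ^ j)) by lra.
  apply Rle_trans with (K * m ^ i * / (m ^ i * m ^ h)).
  - apply Rmult_le_compat; try (left; apply Rinv_0_lt_compat); try nra; [apply Rabs_pos|].
    apply Rinv_le_contravar; nra.
  - right. field. lra.
Qed.

Lemma mu_tilde_scaled_bound (j : nat) : exists K, 0 <= K /\
  forall m, 1 <= m -> Rabs (mu_tilde m j / (m + 1) ^ j) <= K / m ^ (j - Nat.div j 2).
Proof.
  destruct (mu_tilde_bound j) as [K [HK Hb]]. exists K. split; [exact HK|].
  intros m Hm. apply (Rabs_div_pow_le m _ K _ (Nat.div j 2)); try lra; auto.
  pose proof (Nat.Div0.div_le_upper_bound j 2 j). lia.
Qed.

Lemma mu_tilde_scaled_bound_even (j : nat) : exists K, 0 <= K /\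
  forall m, 1 <= m -> Rabs (mu_tilde m (2 * j) / (m + 1) ^ (2 * j)) <= K / m ^ j.
Proof.
  destruct (mu_tilde_scaled_bound (2 * j)) as [K [HK Hb]]. exists K. split; [exact HK|].
  replace (2 * j - Nat.div (2 * j) 2)%nat with j in Hb
    by (rewrite Nat.mul_comm, Nat.div_mul; lia).
  exact Hb.
Qed.

(** * Expansion of g_r *)

Section PoissonExpansion.

Variable m : R.
Hypothesis Hm : 0 < m.

Let u (s : nat) : R := (INR s - m) / (m + 1).

Lemma poisson_mean_scaled_central_pow (j : nat) :
  poisson_summable m (fun s => u s ^ j) /\
  poisson_mean m (fun s => u s ^ j) = mu_tilde m j / (m + 1) ^ j.
Proof.
  assert (Hu : forall s, u s ^ j = / (m + 1) ^ j * (INR s - m) ^ j)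
    by (intros s; unfold u, Rdiv; rewrite Rpow_mult_distr, pow_inv; ring).
  split.
  - apply (ex_series_ext (fun s => poisson_w m s * (/ (m + 1) ^ j * (INR s - m) ^ j))).
    { intros s. rewrite Hu. reflexivity. }
    apply poisson_summable_scal, poisson_summable_central_pow, Hm.
  - replace (poisson_mean m (fun s => u s ^ j))
      with (poisson_mean m (fun s => / (m + 1) ^ j * (INR s - m) ^ j))
      by (apply Series_ext; intros s; rewrite Hu; reflexivity).
    rewrite poisson_mean_scal. unfold mu_tilde, poisson_mean, Rdiv. ring.
Qed.

Lemma g_eq_poisson_mean (r : R) :
  g r m = m / Rpower (m + 1) (r + 1) * poisson_mean m (fun s => Rpower (1 + u s) (- (r + 1))).
Proof.
  assert (Hshift : forall s, poisson_w m (S s) * Rpower (INR (S s)) (- r) =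
            m / Rpower (m + 1) (r + 1) * (poisson_w m s * Rpower (1 + u s) (- (r + 1)))).
  { intros s. pose proof (pos_INR s).
    replace (1 + u s) with ((INR s + 1) / (m + 1)) by (unfold u; field; lra).
    assert (Hdiv : Rpower ((INR s + 1) / (m + 1)) (- (r + 1)) =
                   Rpower (m + 1) (r + 1) * Rpower (INR s + 1) (- (r + 1))).
    { unfold Rpower. rewrite <- exp_plus, ln_div by lra. f_equal. ring. }
    rewrite Hdiv.
    rewrite poisson_w_S, S_INR.
    replace (- r) with (- (r + 1) + 1) by ring.
    rewrite Rpower_plus, Rpower_1 by lra.
    pose proof (Rpower_pos (m + 1) (r + 1)). field. lra. }
  unfold g, poisson_mean. rewrite (Series_ext _ _ Hshift). apply Series_scal_l.
Qed.

Lemma Rabs_poisson_mean_taylor_error (r : R) (n h J : nat) : -1 <= r -> S n = (2 * h)%nat ->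
  Rabs (poisson_mean m (fun s => Rpower (1 + u s) (- (r + 1)))
        - sum_f_R0 (fun k => taylor_coef r k * (mu_tilde m k / (m + 1) ^ k)) n)
  <= taylor_rem_const r n * (mu_tilde m (2 * h) / (m + 1) ^ (2 * h))
     + (Rpower (m + 1) (r + 1) + taylor_coef_abs_sum r n) * 4 ^ J
       * (mu_tilde m (2 * J) / (m + 1) ^ (2 * J)).
Proof.
  intros Hr Hn.
  set (F := fun s => Rpower (1 + u s) (- (r + 1))).
  set (T := fun s => sum_f_R0 (fun k => taylor_coef r k * u s ^ k) n).
  set (Kr := taylor_rem_const r n).
  set (Kg := (Rpower (m + 1) (r + 1) + taylor_coef_abs_sum r n) * 4 ^ J).
  assert (Hu : forall s, / (m + 1) <= 1 + u s).
  { intros s. pose proof (pos_INR s).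
    replace (1 + u s) with ((INR s + 1) * / (m + 1)) by (unfold u; field; lra).
    rewrite <- (Rmult_1_l (/ (m + 1))) at 1.
    apply Rmult_le_compat_r; [left; apply Rinv_0_lt_compat|]; lra. }
  assert (HF : poisson_summable m F).
  { apply (poisson_summable_poly_bound m Hm _ (Rpower (m + 1) (r + 1)) 0). intros s.
    rewrite pow_O, Rmult_1_r, Rabs_right by (left; apply Rpower_pos).
    apply Rpower_opp_le_of_inv_le; [exact Hr | lra | apply Hu]. }
  destruct (poisson_mean_sum m (taylor_coef r) (fun k s => u s ^ k) n
              (fun k => proj1 (poisson_mean_scaled_central_pow k))) as [HT HET].
  cbv beta in HT, HET.
  assert (Hsum : sum_f_R0 (fun k => taylor_coef r k * (mu_tilde m k / (m + 1) ^ k)) n =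
                 poisson_mean m T).
  { unfold T. rewrite HET. apply sum_eq. intros k _.
    rewrite (proj2 (poisson_mean_scaled_central_pow k)). reflexivity. }
  assert (Hbound : forall s, Rabs (F s - T s) <= Kr * u s ^ (2 * h) + Kg * u s ^ (2 * J)).
  { intros s. unfold Kg. rewrite !pow_mult, Rmult_assoc, <- Rpow_mult_distr.
    apply Rpower_taylor_remainder_global; [exact Hr | exact Hn | lra | apply Hu]. }
  destruct (poisson_mean_scaled_central_pow (2 * h)) as [Hh1 Hh2].
  destruct (poisson_mean_scaled_central_pow (2 * J)) as [HJ1 HJ2].
  rewrite Hsum, <- poisson_mean_minus by assumption.
  eapply Rle_trans; [apply Rabs_poisson_mean_le; [exact Hm | exact Hbound |]|].
  - apply poisson_summable_plus; apply poisson_summable_scal; assumption.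
  - rewrite poisson_mean_plus, !poisson_mean_scal, Hh2, HJ2 by
      (try apply poisson_summable_scal; assumption).
    unfold Kr, Kg. right. ring.
Qed.

End PoissonExpansion.

Lemma poisson_mean_taylor_error_bound (r : R) (h : nat) : -1 <= r -> (1 <= h)%nat ->
  exists C, forall m, 1 <= m ->
  Rabs (poisson_mean m (fun s => Rpower (1 + (INR s - m) / (m + 1)) (- (r + 1)))
        - sum_f_R0 (fun k => taylor_coef r k * (mu_tilde m k / (m + 1) ^ k)) (2 * h - 1))
  <= C / m ^ h.
Proof.
  intros Hr Hh.
  set (n := (2 * h - 1)%nat).
  destruct (INR_unbounded (r + 1)) as [A HA].
  set (J := (A + h)%nat).
  destruct (mu_tilde_scaled_bound_even h) as [K1 [HK1 Hb1]].
  destruct (mu_tilde_scaled_bound_even J) as [K2 [HK2 Hb2]].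
  set (Kr := taylor_rem_const r n). set (L := taylor_coef_abs_sum r n).
  exists (Kr * K1 + (1 + L) * 2 ^ A * 4 ^ J * K2).
  intros m Hm.
  eapply Rle_trans;
    [apply (Rabs_poisson_mean_taylor_error m ltac:(lra) r n h J); [exact Hr | unfold n; lia]|].
  pose proof (taylor_rem_const_nonneg r n) as HKr.
  pose proof (taylor_coef_abs_sum_nonneg r n) as HL.
  fold Kr L in HKr, HL |- *.
  assert (H4J : 0 < 4 ^ J) by (apply pow_lt; lra).
  assert (Hmh : 0 < m ^ h) by (apply pow_lt; lra).
  assert (H2mA : 1 <= (2 * m) ^ A) by (apply pow_R1_Rle; lra).
  assert (Hgrowth : Rpower (m + 1) (r + 1) + L <= (1 + L) * (2 * m) ^ A).
  { pose proof (Rpower_succ_le_pow m (r + 1) A Hm ltac:(split; lra)).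
    assert (L * 1 <= L * (2 * m) ^ A) by (apply Rmult_le_compat_l; lra). lra. }
  assert (Hterm1 : Kr * (mu_tilde m (2 * h) / (m + 1) ^ (2 * h)) <= Kr * (K1 / m ^ h)).
  { apply Rmult_le_compat_l; [exact HKr|].
    eapply Rle_trans; [apply Rle_abs | apply Hb1, Hm]. }
  assert (Hterm2 : (Rpower (m + 1) (r + 1) + L) * 4 ^ J * (mu_tilde m (2 * J) / (m + 1) ^ (2 * J))
                   <= (1 + L) * (2 * m) ^ A * 4 ^ J * (K2 / m ^ J)).
  { pose proof (Rpower_pos (m + 1) (r + 1)).
    eapply Rle_trans; [apply Rmult_le_compat_l; [nra | apply Rle_abs]|].
    apply Rmult_le_compat; [nra | apply Rabs_pos | nra | apply Hb2, Hm]. }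
  replace ((1 + L) * (2 * m) ^ A * 4 ^ J * (K2 / m ^ J))
    with ((1 + L) * 2 ^ A * 4 ^ J * K2 / m ^ h) in Hterm2.
  2: { unfold J. rewrite (pow_add m), Rpow_mult_distr. field. split; [lra|].
       apply pow_nonzero. lra. }
  unfold Rdiv in *. lra.
Qed.

Lemma ceil_half_spec (N : nat) : (N = 2 * ceil_half N \/ S N = 2 * ceil_half N)%nat.
Proof.
  unfold ceil_half.
  pose proof (Nat.div_mod (N + 1) 2 ltac:(lia)).
  pose proof (Nat.mod_upper_bound (N + 1) 2 ltac:(lia)). lia.
Qed.

Lemma poisson_mean_expansion (r : R) (N : nat) : -1 <= r -> (1 <= N)%nat ->
  exists C, forall m, 1 <= m ->
  Rabs (poisson_mean m (fun s => Rpower (1 + (INR s - m) / (m + 1)) (- (r + 1)))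
        - sum_f_R0 (fun k => taylor_coef r k * (mu_tilde m k / (m + 1) ^ k)) (N - 1))
  <= C / m ^ ceil_half N.
Proof.
  intros Hr HN.
  set (h := ceil_half N).
  assert (Hh : (1 <= h)%nat) by (unfold h, ceil_half; apply Nat.div_le_lower_bound; lia).
  destruct (poisson_mean_taylor_error_bound r h Hr Hh) as [C0 HC0].
  pose proof (ceil_half_spec N) as Hpar. fold h in Hpar.
  destruct Hpar as [Heven | Hodd].
  - exists C0. replace (N - 1)%nat with (2 * h - 1)%nat by lia. exact HC0.
  - destruct (mu_tilde_scaled_bound N) as [K [HK HbN]].
    replace (N - Nat.div N 2)%nat with h in HbN
      by (pose proof (Nat.div_mod N 2 ltac:(lia));
          pose proof (Nat.mod_upper_bound N 2 ltac:(lia)); lia).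
    exists (C0 + Rabs (taylor_coef r N) * K). intros m Hm.
    specialize (HC0 m Hm). specialize (HbN m Hm).
    replace (2 * h - 1)%nat with (S (N - 1)) in HC0 by lia.
    rewrite tech5 in HC0. replace (S (N - 1)) with N in HC0 by lia.
    assert (Hterm : Rabs (taylor_coef r N * (mu_tilde m N / (m + 1) ^ N))
                      <= Rabs (taylor_coef r N) * K / m ^ h).
    { rewrite Rabs_mult. unfold Rdiv at 2. rewrite Rmult_assoc.
      apply Rmult_le_compat_l; [apply Rabs_pos | exact HbN]. }
    set (t := taylor_coef r N * (mu_tilde m N / (m + 1) ^ N)) in *.
    match goal with |- Rabs (?E - ?P) <= _ =>
      replace (E - P) with ((E - (P + t)) + t) by ring end.
    eapply Rle_trans; [apply Rabs_triang|].
    unfold Rdiv in *. rewrite Rmult_plus_distr_r. apply Rplus_le_compat; assumption.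
Qed.

Theorem theorem2 (r : R) (hr : 0 < r) (N : nat) (hN : (1 <= N)%nat) :
  exists C M : R, forall m : R, M < m ->
    exists err : R,
      Rabs err <= C / m ^ (ceil_half N) /\
      g r m = m / Rpower (m + 1) (r + 1) *
              (sum_f_R0 (fun k => (-1) ^ k * mu_tilde m k / (m + 1) ^ k * gbinom r k)
                        (N - 1) + err).
Proof.
  destruct (poisson_mean_expansion r N ltac:(lra) hN) as [C HC].
  exists C, 1. intros m Hm.
  set (E := poisson_mean m (fun s => Rpower (1 + (INR s - m) / (m + 1)) (- (r + 1)))).
  set (P := sum_f_R0 (fun k => taylor_coef r k * (mu_tilde m k / (m + 1) ^ k)) (N - 1)).
  exists (E - P). split; [apply HC; lra|].
  replace (sum_f_R0 _ (N - 1)) with P.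
  - rewrite g_eq_poisson_mean by lra. fold E. ring.
  - apply sum_eq. intros k _. unfold taylor_coef, Rdiv. ring.
Qed.
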